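(* Let $K$ be a compact Hausdorff space, and let $f,g$ be two non-zero elements of $B_{C(K)}$. Then $B_{C(K)}\subset \overline B(f,1)\cup\overline B(g,1)$ if and only if there exist an isolated point $u$ of $K$ and real numbers $c,d$ such that $f=c\mathds{1}_{\{u\}}$, $g=d\mathds{1}_{\{u\}}$ and $cd<0$.
   Context: $C(K)$ is the Banach space of real-valued continuous functions on $K$ with the supremum norm, $B_{C(K)}$ its closed unit ball, and $\overline B(h,r)$ denotes the closed ball in $C(K)$ with center $h$ and radius $r$. $\mathds{1}_{\{u\}}$ is the indicator function of $\{u\}$. *)

From HB Require Import structures.
From mathcomp Require Import all_boot all_order all_algebra.
From mathcomp Require Import all_classical all_reals all_analysis.
Set Implicit Arguments. Unset Strict Implicit. Unset Printing Implicit Defensive.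
Import Order.TTheory GRing.Theory Num.Theory numFieldNormedType.Exports.
Local Open Scope ring_scope.
Local Open Scope classical_set_scope.

(* Closed ball in C(K) for the sup norm: h \in \overline B(c, r) iff
   sup_x |h x - c x| <= r, i.e. |h x - c x| <= r for every x. *)
Definition in_cball {K : topologicalType} {R : realType}
  (c : K -> R) (r : R) (h : K -> R) : Prop :=
  forall x : K, `|h x - c x| <= r.

Definition in_unit_ball {K : topologicalType} {R : realType} (h : K -> R) : Prop :=
  continuous h /\ in_cball (fun _ => 0) 1 h.

From HB Require Import structures.
From mathcomp Require Import all_boot all_order all_algebra.
From mathcomp Require Import all_classical all_reals all_analysis.
From mathcomp Require Import lra.
Import Order.TTheory GRing.Theory Num.Theory numFieldNormedType.Exports.
Local Open Scope ring_scope.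
Local Open Scope classical_set_scope.

(* If f(x1) and g(x2) are non-zero at distinct points, a Urysohn function
   joining the values -sgn f(x1) at x1 and -sgn g(x2) at x2 lies in the unit
   ball but is at distance > 1 from both f and g.  Hence f and g are supported
   on one common point u, which is isolated since f is continuous and
   f(u) <> 0.  The constant -sgn f(u) then forces g(u) to have the opposite
   sign to f(u).  Conversely, when f = c 1_u and g = d 1_u with cd < 0, any h
   in the unit ball is within 1 of f or g according to the sign of h(u). *)

Definition sign_opposite {R : realType} (y : R) : R := if 0 < y then -1 else 1.

Lemma normr_sign_opposite {R : realType} (y : R) : `|sign_opposite y| = 1.
Proof. by rewrite /sign_opposite; case: ifP; rewrite ?normrN normr1. Qed.

Lemma dist_sign_opposite_gt1 {R : realType} {y : R} :
  y != 0 -> 1 < `|sign_opposite y - y|.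
Proof.
rewrite /sign_opposite neq_lt => /orP[y_lt0|y_gt0].
  by rewrite (lt_gtF y_lt0) ger0_norm; lra.
by rewrite y_gt0 ler0_norm; lra.
Qed.

Lemma sign_opposite_eq {R : realType} {y z : R} :
  0 < y * z -> sign_opposite y = sign_opposite z.
Proof.
rewrite /sign_opposite => yz_gt0.
have [y_gt0|y_le0] := ltP 0 y; have [z_gt0|z_le0] := ltP 0 z => //.
all: by exfalso; nra.
Qed.

Lemma norm_lerp_le1 {R : realType} (a b t : R) :
  `|a| <= 1 -> `|b| <= 1 -> 0 <= t <= 1 -> `|a + (b - a) * t| <= 1.
Proof. by rewrite !ler_norml => /andP[? ?] /andP[? ?] /andP[? ?]; nra. Qed.

Section UnitBall.
Context {R : realType} {K : topologicalType}.
Implicit Types (c f g h : K -> R) (u x : K).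

Definition covers_unit_ball f g :=
  forall h, in_unit_ball h -> in_cball f 1 h \/ in_cball g 1 h.

Lemma in_unit_cball_bounds h :
  in_cball (fun=> 0) 1 h -> forall x, -1 <= h x <= 1.
Proof. by move=> hb x; have := hb x; rewrite subr0 ler_norml. Qed.

Lemma notin_cball_sign_opposite {c h x} :
  c x != 0 -> h x = sign_opposite (c x) -> ~ in_cball c 1 h.
Proof.
move=> cx_neq0 hx /(_ x); rewrite hx.
by move/(lt_le_trans (dist_sign_opposite_gt1 cx_neq0)); rewrite ltxx.
Qed.

Lemma in_unit_ball_cst (a : R) : `|a| <= 1 -> in_unit_ball (fun _ : K => a).
Proof. by move=> a_le1; split=> [x|x]; [exact: cvg_cst | rewrite subr0]. Qed.

Lemma in_cball_scale_indicator h u (c : R) :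
  (forall x, -1 <= h x <= 1) -> `|h u - c| <= 1 ->
  in_cball (fun x => c * \1_[set u] x) 1 h.
Proof.
move=> h_bnd hu_c x; rewrite indicE.
have [->|x_neq_u] := eqVneq x u; first by rewrite mem_set // mulr1.
rewrite memNset ?mulr0 ?subr0 ?ler_norml //= => /eqP.
by rewrite (negPf x_neq_u).
Qed.

Lemma eq_scale_indicator f u :
  (forall x, f x != 0 -> x = u) -> f = (fun x => f u * \1_[set u] x).
Proof.
move=> supp_f; apply/funext => x; rewrite indicE.
have [->|x_neq_u] := eqVneq x u; first by rewrite mem_set // mulr1.
rewrite memNset ?mulr0 => [|/= /eqP]; last by rewrite (negPf x_neq_u).
by apply/eqP; apply: contraNT x_neq_u => /supp_f ->.
Qed.

Lemma isolated_of_continuous_support {f u} :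
  continuous f -> f u != 0 -> (forall x, f x != 0 -> x = u) ->
  isolated [set: K] u.
Proof.
move=> f_cont fu_neq0 supp_f; split; first by rewrite inE.
exists [set x | `|f u - f x| < `|f u|].
  by apply: (cvgr_dist_lt _ _ (f_cont u)); rewrite normr_gt0.
apply/seteqP; split => [x /= [near_fu _]|x /= ->].
  by apply: supp_f; apply: contraTneq near_fu => ->; rewrite subr0 ltxx.
by rewrite subrr normr0 normr_gt0.
Qed.

Lemma exists_nonzero {f} : f <> (fun=> 0) -> exists x, f x != 0.
Proof.
move=> f_neq0; apply: contrapT => all0; apply: f_neq0; apply/funext => x.
by apply/eqP; apply: contrapT => fx_neq0; apply: all0; exists x; apply/negP.
Qed.

Lemma covers_unit_ball_sign {f g u} :
  covers_unit_ball f g -> f u != 0 -> g u != 0 -> f u * g u < 0.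
Proof.
move=> cov fu_neq0 gu_neq0.
rewrite ltNge le_eqVlt negb_or eq_sym mulf_neq0 //=; apply/negP => fg_gt0.
have cst_ball : in_unit_ball (fun _ : K => sign_opposite (f u)).
  by apply: in_unit_ball_cst; rewrite normr_sign_opposite.
have [] := cov _ cst_ball.
  exact: (notin_cball_sign_opposite fu_neq0).
apply: (notin_cball_sign_opposite gu_neq0).
by rewrite (sign_opposite_eq fg_gt0).
Qed.

Lemma covers_unit_ball_scale_indicator u (c d : R) :
  `|c| <= 1 -> `|d| <= 1 -> c * d < 0 ->
  covers_unit_ball (fun x => c * \1_[set u] x) (fun x => d * \1_[set u] x).
Proof.
move=> c_le1 d_le1 cd_lt0 h [_ /in_unit_cball_bounds h_bnd].
have := h_bnd u; move: c_le1 d_le1; rewrite !ler_norml => c_bnd d_bnd hu_bnd.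
have [c_gt0|c_le0] := ltP 0 c; have [hu_ge0|hu_lt0] := leP 0 (h u);
  [left|right|right|left]; apply: in_cball_scale_indicator;
  rewrite ?ler_norml //; nra.
Qed.

Hypotheses (K_compact : compact [set: K]) (K_hausdorff : hausdorff_space K).

Lemma urysohn_points x1 x2 : x1 <> x2 ->
  exists p : K -> R, [/\ continuous p, p x1 = 0, p x2 = 1 &
     forall x, 0 <= p x <= 1].
Proof.
move=> x1_neq_x2.
have K_normal := compact_normal K_hausdorff K_compact.
have K_acc := hausdorff_accessible K_hausdorff.
have disj : [set x1] `&` [set x2] = set0.
  by apply/seteqP; split => // x [/= ->].
have [p [p_cont p1 p2 p_range]] := @urysohn_ext_itv K R K_normal _ _ 0 1
  (@accessible_closed_set1 K K_acc x1) (@accessible_closed_set1 K K_acc x2)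
  disj ltr01.
exists p; split => //.
- exact: p1 (ex_intro2 _ _ x1 erefl erefl).
- exact: p2 (ex_intro2 _ _ x2 erefl erefl).
- move=> x; have : range p (p x) by exists x.
  by move/p_range; rewrite /= in_itv.
Qed.

Lemma covers_unit_ball_same_point {f g x1 x2} :
  covers_unit_ball f g -> f x1 != 0 -> g x2 != 0 -> x1 = x2.
Proof.
move=> cov fx1_neq0 gx2_neq0; apply: contrapT => /urysohn_points.
move=> [p [p_cont p1 p2 p_range]].
pose a := sign_opposite (f x1); pose b := sign_opposite (g x2).
pose h x := a + (b - a) * p x.
have h_ball : in_unit_ball h.
  split=> [x|x].
    by apply: cvgD; [exact: cvg_cst | apply: cvgMr; exact: p_cont].
  by rewrite subr0 norm_lerp_le1 ?normr_sign_opposite.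
have [f_far|g_far] := cov _ h_ball.
  apply: (notin_cball_sign_opposite fx1_neq0) f_far.
  by rewrite /h p1 mulr0 addr0.
apply: (notin_cball_sign_opposite gx2_neq0) g_far.
by rewrite /h p2 mulr1 addrC subrK.
Qed.

End UnitBall.

Theorem lemma2p3 (R : realType) (K : topologicalType)
  (K_compact : compact [set: K]) (K_hausdorff : hausdorff_space K)
  (f g : K -> R) (Hf : in_unit_ball f) (Hg : in_unit_ball g)
  (f_nz : f <> (fun _ => 0)) (g_nz : g <> (fun _ => 0)) :
  (forall h : K -> R, in_unit_ball h -> in_cball f 1 h \/ in_cball g 1 h) <->
  (exists u : K, isolated [set: K] u /\
     exists c d : R, f = (fun x => c * \1_[set u] x) /\
                     g = (fun x => d * \1_[set u] x) /\ c * d < 0).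
Proof.
split=> [cov|[u [_ [c [d [f_eq [g_eq cd_lt0]]]]]]].
- have same_point x y : f x != 0 -> g y != 0 -> x = y.
    exact: (covers_unit_ball_same_point K_compact K_hausdorff cov).
  have [u fu_neq0] := exists_nonzero f_nz.
  have [v gv_neq0] := exists_nonzero g_nz.
  have gu_neq0 : g u != 0 by rewrite (same_point _ _ fu_neq0 gv_neq0).
  have supp_f x : f x != 0 -> x = u by move/(same_point _ _)/(_ gu_neq0).
  have supp_g x : g x != 0 -> x = u by move/(same_point _ _ fu_neq0)->.
  exists u; split.
    exact: isolated_of_continuous_support (proj1 Hf) fu_neq0 supp_f.
  exists (f u), (g u); split; first exact: eq_scale_indicator.
  by split; [exact: eq_scale_indicator | exact: covers_unit_ball_sign].
- subst f g; apply: covers_unit_ball_scale_indicator cd_lt0.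
  + by have := proj2 Hf u; rewrite indicE mem_set // mulr1 subr0.
  + by have := proj2 Hg u; rewrite indicE mem_set // mulr1 subr0.
Qed.
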